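(* Let $n\ge2$, $m\ge1$, and let $C$ be an $n$-copula, with $C_m=\mathscr{B}^n_m(C)$. On a probability space $(\Omega,P)$ let $(X_1,\ldots,X_n)$ be a random vector with joint distribution function $C$ (so each $X_r$ is uniform on $I$), and let $X_r^j$ ($r=1,\ldots,n$, $j=1,\ldots,m$) be i.i.d. uniform random variables on $I$, independent of $(X_1,\ldots,X_n)$. For each $r$ let $X_r^{(1)}<\cdots<X_r^{(m)}$ be the order statistics of $X_r^1,\ldots,X_r^m$ (a.s. distinct). For a multi-index $k=(k_1,\ldots,k_n)\in\{1,\ldots,m\}^n$ let $E_k$ be the event $\{\tfrac{k_r-1}{m}<X_r<\tfrac{k_r}{m}\text{ for all }r=1,\ldots,n\}$; these events are disjoint and their union has probability $1$. Define, almost surely, $Y_r=\sum_{k\in\{1,\ldots,m\}^n}\mathbf 1_{E_k}\,X_r^{(k_r)}$ for $r=1,\ldots,n$ (i.e. on $E_k$, $Y_r=X_r^{(k_r)}$). Then for all $(x_1,\ldots,x_n)\in I^n$, $$C_m(x_1,\ldots,x_n)=P(Y_1<x_1,\ldots,Y_n<x_n).$$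
   Context: $I=[0,1]$. An $n$-copula is a function $C:I^n\to I$ that is the joint distribution function of a random vector whose marginals are uniform on $I$ (equivalently: grounded, with uniform margins $C(1,\ldots,x_k,\ldots,1)=x_k$, and $n$-increasing). $b_{i,m}(t)=\binom{m}{i}t^i(1-t)^{m-i}$ and $\mathscr{B}^n_m(C)(x_1,\ldots,x_n)=\sum_{i_1,\ldots,i_n=0}^m C(\tfrac{i_1}{m},\ldots,\tfrac{i_n}{m})\,b_{i_1,m}(x_1)\cdots b_{i_n,m}(x_n)$. *)

From HB Require Import structures.
From mathcomp Require Import all_boot all_order all_algebra.
From mathcomp Require Import all_classical all_reals all_analysis.
Set Implicit Arguments. Unset Strict Implicit. Unset Printing Implicit Defensive.
Import Order.TTheory GRing.Theory Num.Theory.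
Local Open Scope classical_set_scope.
Local Open Scope ring_scope.

Section Defs.
Variable R : realType.

Definition in_unit_cube n (x : 'I_n -> R) : Prop := forall r, 0 <= x r <= 1.

(* n-copula as in the context: grounded, uniform margins, n-increasing
   (C-volume of every box in I^n is nonnegative). *)
Definition is_copula n (C : ('I_n -> R) -> R) : Prop :=
  [/\ (forall x, in_unit_cube x -> 0 <= C x <= 1),
      (forall x, in_unit_cube x -> (exists k, x k = 0) -> C x = 0),
      (forall (k : 'I_n) (t : R), 0 <= t <= 1 ->
          C (fun r => if r == k then t else 1) = t) &
      (forall a b : 'I_n -> R, in_unit_cube a -> in_unit_cube b ->
          (forall r, a r <= b r) ->
          0 <= \sum_(S : {set 'I_n})
                 (-1) ^+ (n - #|S|) * C (fun r => if r \in S then b r else a r))].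

Definition bern (m i : nat) (t : R) : R :=
  ('C(m, i))%:R * t ^+ i * (1 - t) ^+ (m - i).

Definition bernstein_copula n m (C : ('I_n -> R) -> R) (x : 'I_n -> R) : R :=
  \sum_(i : {ffun 'I_n -> 'I_m.+1})
     C (fun r => (i r)%:R / m%:R) * \prod_(r < n) bern m (i r) (x r).

(* order statistic: [order_stat v k] is the (k+1)-th smallest of the
   values v 0, ..., v (m-1)  (k : 'I_m, 0-based) *)
Definition order_stat m (v : 'I_m -> R) (k : 'I_m) : R :=
  nth 0 (sort <=%R [seq v j | j <- enum 'I_m]) k.

End Defs.

(* On the cell E_k the statistic Y_r is the (k_r+1)-th smallest of X_r^1, ..., X_r^m,
   so Y_r < x_r iff more than k_r of the X_r^j lie below x_r, i.e. iff X_r < S_r/m where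
   S_r is the set of those j.  Up to a null set, {Y < x} is therefore the disjoint union,
   over all families S = (S_r) of subsets of {1..m}, of the events
   "X_r lies in one of the first |S_r| cells and X_r^j < x_r exactly for j in S_r".
   By independence this event has probability
   C(|S_1|/m, ..., |S_n|/m) * prod_r x_r^|S_r| (1 - x_r)^(m - |S_r|),
   and grouping the families S by their cardinalities produces the binomial
   coefficients of the Bernstein polynomial.  The null sets are handled through the
   margins of C: each X_r is uniform, hence a.s. in (0,1] and off the grid points k/m. *)

From HB Require Import structures.
From mathcomp Require Import all_boot all_order all_algebra.
From mathcomp Require Import all_classical all_reals all_analysis.
From mathcomp Require Import ring.
Import Order.TTheory GRing.Theory Num.Theory.
Local Open Scope classical_set_scope.
Local Open Scope ring_scope.
Set Implicit Arguments. Unset Strict Implicit. Unset Printing Implicit Defensive.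

Lemma nth_sort_lt (R : realDomainType) (s : seq R) (k : nat) (t : R) :
  (k < size s)%N ->
  (nth 0 (sort <=%R s) k < t) = (k < count (fun y : R => (y < t)%R) s)%N.
Proof.
rewrite -(count_sort <=%R) -(size_sort <=%R); set s' := sort _ s => ks.
have s'_sorted : sorted <=%R s' by apply: sort_sorted; exact: le_total.
have s'_mono i j : (i <= j < size s')%N -> nth 0 s' i <= nth 0 s' j.
  case/andP=> ij js; apply: (le_sorted_leq_nth 0 s'_sorted) => //.
  by rewrite inE (leq_ltn_trans ij js).
have [kt|tk] := ltP (nth 0 s' k) t.
  rewrite -[in RHS](cat_take_drop k.+1 s') count_cat; apply/esym.
  have : all (fun y => y < t) (take k.+1 s').
    apply/(all_nthP 0) => i; rewrite size_takel // => ik.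
    by rewrite nth_take //; apply: le_lt_trans kt; apply: s'_mono; rewrite -ltnS ik.
  by rewrite all_count size_takel // => /eqP->; rewrite leq_addr.
rewrite -[in RHS](cat_take_drop k s') count_cat.
have -> : count (fun y => y < t) (drop k s') = 0%N.
  apply/eqP; rewrite -leqn0 leqNgt -has_count; apply/(has_nthP 0) => -[i].
  rewrite size_drop nth_drop ltn_subRL => ik.
  by rewrite ltNge (le_trans tk) // s'_mono // leq_addr.
apply/esym/negbTE; rewrite -leqNgt addn0.
by apply: leq_trans (count_size _ _) _; rewrite size_take; case: ltnP.
Qed.

Lemma order_stat_lt (R : realType) m (v : 'I_m -> R) (k : 'I_m) (t : R) :
  (order_stat v k < t) = (k < #|[set j | (v j < t)%R]%SET|)%N.
Proof.
rewrite /order_stat nth_sort_lt; last by rewrite size_map size_enum_ord.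
by rewrite count_map -sum1dep_card sum1_count enumT.
Qed.

Section MeasureFacts.
Context d (T : measurableType d) (R : realType) (mu : {content set T -> \bar R}).

Lemma fin_forall_measurable (I : finType) (F : I -> set T) :
  (forall i, measurable (F i)) -> measurable [set w | forall i, F i w].
Proof.
move=> mF; rewrite (_ : [set w | _] = \bigcap_(i in setT) F i).
  by apply: fin_bigcap_measurable => //; exact: finite_finset.
by apply/seteqP; split=> w /= h i //; exact: h.
Qed.

Lemma setU_enum (I : finType) (F : I -> set T) :
  [set w | exists i, F i w] = \big[setU/set0]_(i <- enum I) F i.
Proof.
apply/seteqP; split=> w.
  case=> i Fi; have : i \in enum I by rewrite mem_enum.
  elim: (enum I) => // j s IH; rewrite in_cons big_cons.
  by case/orP=> [/eqP<-|/IH]; [left|right].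
elim: (enum I) => [|j s IH]; rewrite ?big_nil ?big_cons //.
by case=> [Fj|/IH//]; exists j.
Qed.

Lemma fin_exists_measurable (I : finType) (F : I -> set T) :
  (forall i, measurable (F i)) -> measurable [set w | exists i, F i w].
Proof. by move=> mF; rewrite setU_enum; apply: bigsetU_measurable. Qed.

Lemma negligible_fin_exists (I : finType) (F : I -> set T) :
  (forall i, mu.-negligible (F i)) -> mu.-negligible [set w | exists i, F i w].
Proof.
move=> nF; rewrite setU_enum; elim/big_ind: _ => //.
  exact: negligible_set0.
exact: negligibleU.
Qed.

Lemma measure_fin_exists (I : finType) (F : I -> set T) :
  (forall i, measurable (F i)) -> (forall i j, i != j -> F i `&` F j = set0) ->
  mu [set w | exists i, F i w] = (\sum_(i : I) mu (F i))%E.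
Proof.
move=> mF dF; rewrite setU_enum -big_enum /=.
elim: (enum I) (enum_uniq I) => [|i s IH]; first by rewrite !big_nil measure0.
move=> /= /andP[i_notin s_uniq]; rewrite !big_cons measureU //.
- by rewrite IH.
- by apply: bigsetU_measurable => j _.
elim: s i_notin {IH s_uniq} => [|j s IH]; first by rewrite big_nil setI0.
by rewrite in_cons negb_or big_cons setIUr => /andP[/dF-> /IH->]; rewrite setU0.
Qed.

Lemma measure_eq_negligible (A B N : set T) : measurable A -> measurable B ->
  mu.-negligible N -> A `<=` B `|` N -> B `<=` A `|` N -> mu A = mu B.
Proof.
move=> mA mB nN AB BA.
have diff0 U V : measurable U -> measurable V -> U `<=` V `|` N -> mu (U `\` V) = 0.
  move=> mU mV UV; apply: measure_negligible; first exact: measurableD.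
  by apply: negligibleS nN => w [/UV[]].
by rewrite (measureDI mu mA mB) (measureDI mu mB mA) !diff0 // setIC.
Qed.

End MeasureFacts.

Section Uniform.
Variable R : realType.

Lemma uniform01_lt (x : R) : 0 <= x <= 1 ->
  uniform_prob (@ltr01 R) `]-oo, x[ = x%:E.
Proof.
move=> /andP[x0 x1].
rewrite /uniform_prob integral_uniform_pdf.
have -> : `]-oo, x[ `&` `[0, 1] = `[0, x[%classic :> set R.
  apply/seteqP; split => y /=; rewrite !in_itv /=.
    by move=> [-> /andP[-> _]].
  by move=> /andP[y0 yx]; split => //; rewrite y0 (le_trans (ltW yx)).
rewrite (eq_integral (cst 1%:E)); last first.
  move=> y; rewrite inE /= in_itv /= => /andP[y0 yx].
  by rewrite /uniform_pdf y0 (le_trans (ltW yx)) // subr0 invr1.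
rewrite integral_cst //= mul1e lebesgue_measure_itv /= lte_fin.
case: ltP => [x_gt0|x_le0]; first by rewrite oppr0 adde0.
by have -> : x = 0 by apply/eqP; rewrite eq_le x_le0 x0.
Qed.

Lemma uniform01_ge (x : R) : 0 <= x <= 1 ->
  uniform_prob (@ltr01 R) `[x, +oo[ = (1 - x)%:E.
Proof.
move=> x01; have -> : `[x, +oo[%classic = ~` `]-oo, x[%classic :> set R.
  by apply/seteqP; split => y /=; rewrite !in_itv /= andbT leNgt => /negP.
by rewrite probability_setC // EFinB; congr (_ - _)%E; exact: uniform01_lt.
Qed.

End Uniform.

Section Grid.
Variables (R : realType) (m : nat).
Hypothesis m_gt0 : (0 < m)%N.

Definition grid (k : nat) : R := k%:R / m%:R.

Lemma grid_lt k k' : (grid k < grid k') = (k < k')%N.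
Proof. by rewrite /grid ltr_pM2r ?invr_gt0 ?ltr0n // ltr_nat. Qed.

Lemma grid_le k k' : (grid k <= grid k') = (k <= k')%N.
Proof. by rewrite /grid ler_pM2r ?invr_gt0 ?ltr0n // ler_nat. Qed.

Lemma grid_itv k : (k <= m)%N -> 0 <= grid k <= 1.
Proof. by move=> km; rewrite /grid divr_ge0 //= ler_pdivrMr ?ltr0n // mul1r ler_nat. Qed.

Definition grid_cell (t : R) := exists k : 'I_m, grid k < t < grid k.+1.

Lemma grid_cell_uniq t k k' :
  grid k < t < grid k.+1 -> grid k' < t < grid k'.+1 -> k = k'.
Proof.
move=> /andP[a b] /andP[c e]; apply/eqP; rewrite eqn_leq.
by have := lt_trans a e; have := lt_trans c b; rewrite !grid_lt !ltnS => -> ->.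
Qed.

Lemma grid_cell_lt t k j : grid k < t < grid k.+1 -> (t < grid j) = (k < j)%N.
Proof.
move=> /andP[kt tk1]; apply/idP/idP => [tj|kj]; first by rewrite -grid_lt (lt_trans kt).
by apply: lt_le_trans tk1 _; rewrite grid_le.
Qed.

Lemma grid_cell_le t k j : grid k < t < grid k.+1 -> (t <= grid j) = (k < j)%N.
Proof.
move=> /andP[kt tk1]; apply/idP/idP => [tj|kj]; first by rewrite -grid_lt (lt_le_trans kt).
by apply/ltW/(lt_le_trans tk1); rewrite grid_le.
Qed.

Lemma grid_cell_measurable : measurable [set t : R | grid_cell t].
Proof.
have -> : [set t | grid_cell t] = [set t | exists k : 'I_m, `]grid k, grid k.+1[%classic t].
  by apply/seteqP; split=> t [k kt]; exists k; move: kt; rewrite set_itvoo.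
by apply: fin_exists_measurable => k; exact: measurable_itv.
Qed.

Lemma not_grid_cell t : ~ grid_cell t ->
  t <= 0 \/ 1 < t \/ exists j : 'I_m.+1, t = grid j.
Proof.
move=> no_cell; have [t_le0|t_gt0] := leP t 0; [by left | right].
have [t_gt1|t_le1] := ltP 1 t; [by left | right].
have tm_ge0 : 0 <= t * m%:R by rewrite mulr_ge0 // ltW.
have /andP[kt tk] := truncn_itv tm_ge0; set k := Num.truncn _ in kt tk.
have k_le_m : (k <= m)%N.
  by rewrite -(ler_nat R); apply: le_trans kt _; rewrite ler_piMl ?ler0n.
have [tkE|tk_neq] := eqVneq t (grid k).
  by exists (Ordinal (k_le_m : (k < m.+1)%N)).
exfalso; apply: no_cell.
have gk_lt : grid k < t.
  by rewrite lt_neqAle eq_sym tk_neq /grid ler_pdivrMr ?ltr0n.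
have k_lt_m : (k < m)%N.
  rewrite -grid_lt; apply: lt_le_trans gk_lt _.
  by rewrite /grid divff // gt_eqF ?ltr0n.
by exists (Ordinal k_lt_m); rewrite gk_lt /grid ltr_pdivlMr ?ltr0n.
Qed.

End Grid.

Arguments grid {R} m k%_nat.

Section SubsetFamilies.
Variables (R : comPzRingType) (n m : nat).

Lemma prod_if_mem (A : {set 'I_m}) (a b : R) :
  \prod_(j < m) (if j \in A then a else b) = a ^+ #|A| * b ^+ (m - #|A|).
Proof.
rewrite (bigID (mem A)) /= (eq_bigr (fun=> a)); last by move=> j ->.
rewrite prodr_const (eq_bigr (fun=> b)); last by move=> j /negbTE->.
have -> : (m - #|A|)%N = #|~: A| by rewrite [RHS]cardsCs finset.setCK card_ord.
by rewrite prodr_const; congr (_ * b ^+ _); apply: eq_card => j; rewrite !inE.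
Qed.

Definition card_ffun (S : {ffun 'I_n -> {set 'I_m}}) : {ffun 'I_n -> 'I_m.+1} :=
  [ffun r => inord #|S r|].

Lemma card_ffunE S r : card_ffun S r = #|S r| :> nat.
Proof. by rewrite ffunE inordK // ltnS (leq_trans (max_card _)) ?card_ord. Qed.

Lemma sum_card_ffun (F : {ffun 'I_n -> 'I_m.+1} -> R) :
  \sum_(S : {ffun 'I_n -> {set 'I_m}}) F (card_ffun S) =
  \sum_(i : {ffun 'I_n -> 'I_m.+1}) F i * \prod_(r < n) ('C(m, i r))%:R.
Proof.
rewrite (partition_big card_ffun predT) //=; apply: eq_bigr => i _.
rewrite (eq_bigr (fun=> F i)); last by move=> S /eqP->.
rewrite sumr_const -mulr_natr -natr_prod; congr (_ * _%:R).
have -> : #|[pred S | card_ffun S == i]| =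
    #|family (fun r => [pred A : {set 'I_m} | #|A| == i r])|.
  apply: eq_card => S; rewrite inE; apply/eqP/familyP => [<- r|Si].
    by rewrite inE card_ffunE.
  by apply/ffunP => r; apply/val_inj; rewrite /= card_ffunE; apply/eqP; exact: Si.
rewrite card_family foldrE big_map big_enum /=; apply: eq_bigr => r _.
by rewrite -cardsE card_draws card_ord.
Qed.

End SubsetFamilies.

Section RVEvents.
Context d (T : measurableType d) (R : realType) (P : probability T R).
Implicit Type f : {RV P >-> R}.

(* Specializations to [P] of content lemmas: their statements mention [P] itself,
   so they rewrite terms [P A] that the generic versions do not match. *)
Lemma probability_negligibleP A : measurable A -> P.-negligible A <-> P A = 0%E.
Proof. exact: negligibleP. Qed.

Lemma probability_setD A B : measurable A -> measurable B ->
  P (A `\` B) = (P A - P (A `&` B))%E.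
Proof.
by move=> mA mB; apply: measureD => //; rewrite (le_lt_trans (probability_le1 P mA)) ?ltry.
Qed.

Lemma RV_le_measurable f c : measurable [set w | f w <= c].
Proof.
rewrite (_ : [set w | f w <= c] = f @^-1` `]-oo, c]); first exact: measurable_funPTI.
by apply/seteqP; split=> w /=; rewrite in_itv.
Qed.

Lemma RV_itv_measurable f a b : measurable [set w | a < f w < b].
Proof.
rewrite (_ : [set w | a < f w < b] = f @^-1` `]a, b[); first exact: measurable_funPTI.
by apply/seteqP; split=> w /=; rewrite in_itv.
Qed.

Lemma RV_itv_oc_measurable f a b : measurable [set w | a < f w <= b].
Proof.
rewrite (_ : [set w | a < f w <= b] = f @^-1` `]a, b]); first exact: measurable_funPTI.
by apply/seteqP; split=> w /=; rewrite in_itv.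
Qed.

Lemma RV_eq_measurable f c : measurable [set w | f w = c].
Proof.
rewrite (_ : [set w | f w = c] = f @^-1` [set c]); first exact: measurable_funPTI.
by apply/seteqP; split=> w.
Qed.

End RVEvents.

Section CopulaVector.
Context (R : realType) (n : nat) (C : ('I_n -> R) -> R)
  d (T : measurableType d) (P : probability T R) (X : 'I_n -> {RV P >-> R}).
Hypothesis C_margin : forall (k : 'I_n) (t : R), 0 <= t <= 1 ->
  C (fun r => if r == k then t else 1) = t.
Hypothesis X_cdf : forall x : 'I_n -> R, in_unit_cube x ->
  P [set w | forall r, X r w <= x r] = (C x)%:E.

Lemma X_le1_prob : P [set w | forall r, X r w <= 1] = 1%:E.
Proof.
have [[r _]|no_index] := pselect (exists r : 'I_n, True).
  rewrite X_cdf => [|s]; last by rewrite ler01 lexx.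
  have := C_margin r (t := 1); rewrite ler01 lexx => /(_ isT).
  by under eq_fun do rewrite if_same; move=> ->.
rewrite (_ : [set w | _] = setT) ?probability_setT //.
by apply/seteqP; split=> // w _ r; case: no_index; exists r.
Qed.

Lemma X_out_negligible : P.-negligible (~` [set w | forall r, X r w <= 1]).
Proof.
have X_le1_measurable : measurable [set w | forall r, X r w <= 1].
  by apply: fin_forall_measurable => r; exact: RV_le_measurable.
apply/probability_negligibleP; first exact: measurableC.
by rewrite probability_setC // X_le1_prob subee.
Qed.

Lemma X_margin r t : 0 <= t <= 1 -> P [set w | X r w <= t] = t%:E.
Proof.
move=> t01; set e := fun s => if s == r then t else 1.
have e_cube : in_unit_cube e by move=> s; rewrite /e; case: ifP; rewrite ?ler01 ?lexx.
transitivity (C e)%:E; last by rewrite C_margin.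
rewrite -(X_cdf e_cube).
apply: (measure_eq_negligible _ _ X_out_negligible).
- exact: RV_le_measurable.
- by apply: fin_forall_measurable => s; exact: RV_le_measurable.
- move=> w Xrw; have [le1|] := pselect (forall s, X s w <= 1); last by right.
  by left => s; rewrite /e; case: eqP => [->|_].
- by move=> w /(_ r); rewrite /e eqxx; left.
Qed.

Lemma X_itv_prob r a b : 0 <= a -> a <= b <= 1 ->
  P [set w | a < X r w <= b] = (b - a)%:E.
Proof.
move=> a_ge0 /andP[ab b1].
rewrite (_ : [set w | _] = [set w | X r w <= b] `\` [set w | X r w <= a]); last first.
  apply/seteqP; split=> w /= => [/andP[aX ->]|[-> /negP]]; last by rewrite andbT ltNge.
  by split=> //; apply/negP; rewrite -ltNge.
rewrite probability_setD; [|exact: RV_le_measurable..].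
rewrite (_ : _ `&` _ = [set w | X r w <= a]); last first.
  by apply/seteqP; split=> w /= => [[]//|Xa]; split=> //; exact: le_trans ab.
by rewrite !X_margin ?a_ge0 ?b1 ?(le_trans a_ge0 ab) ?(le_trans ab b1) // EFinB.
Qed.

Lemma X_atomless r c : P.-negligible [set w | X r w = c].
Proof.
have [c_le0|c_gt0] := leP c 0.
  apply: (negligibleS (A := [set w | X r w <= 0])) => [w /= ->//|].
  by apply/probability_negligibleP; [exact: RV_le_measurable | rewrite X_margin ?lexx ?ler01].
have [c_gt1|c_le1] := ltP 1 c.
  by apply: (negligibleS _ X_out_negligible) => w /= Xc /(_ r); rewrite Xc leNgt c_gt1.
apply/probability_negligibleP; first exact: RV_eq_measurable.
(* P(X r = c) <= P(c - e < X r <= c) = e for every small e > 0 *)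
apply/le_anti/andP; split; last exact: measure_ge0.
apply/lee_addgt0Pr => e e_gt0; rewrite add0e.
pose e' := Order.min e c.
have e'_gt0 : 0 < e' by rewrite lt_min e_gt0.
have e'_le : e' <= c by rewrite ge_min lexx orbT.
apply: (@le_trans _ _ (P [set w | c - e' < X r w <= c])).
  apply: le_measure; rewrite ?inE.
  - exact: RV_eq_measurable.
  - exact: RV_itv_oc_measurable.
  - by move=> w /= ->; rewrite lexx andbT ltrBlDr ltrDl.
rewrite X_itv_prob ?subr_ge0 ?gerBl ?c_le1 ?andbT ?(ltW e'_gt0) //.
by rewrite opprB addrC subrK lee_fin ge_min lexx.
Qed.

Variable m : nat.
Hypothesis m_gt0 : (0 < m)%N.

Definition off_grid := [set w | exists r, ~ grid_cell m (X r w)].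

Lemma off_grid_negligible : P.-negligible off_grid.
Proof.
apply: (negligibleS (A := [set w | exists r : 'I_n,
    ([set w | X r w <= 0] `|` ~` [set w | forall s, X s w <= 1]
      `|` [set w | exists j : 'I_m.+1, X r w = grid m j]) w])).
  move=> w [r /(not_grid_cell m_gt0)[Xr|[Xr|Xr]]]; exists r; [left; left | left; right | right] => //.
  by move=> /(_ r); rewrite leNgt Xr.
apply: negligible_fin_exists => r; apply: negligibleU; first apply: negligibleU.
- by apply/probability_negligibleP; [exact: RV_le_measurable | rewrite X_margin // lexx ler01].
- exact: X_out_negligible.
- by apply: negligible_fin_exists => j; exact: X_atomless.
Qed.

Definition cell_event (k : {ffun 'I_n -> 'I_m}) :=
  [set w | forall r, grid m (k r) < X r w < grid m (k r).+1].

Lemma cell_event_measurable k : measurable (cell_event k).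
Proof. by apply: fin_forall_measurable => r; exact: RV_itv_measurable. Qed.

Lemma cell_event_uniq k k' w : cell_event k w -> cell_event k' w -> k = k'.
Proof.
move=> kw k'w; apply/ffunP => r; apply/val_inj.
exact: (grid_cell_uniq m_gt0 (kw r) (k'w r)).
Qed.

Lemma cell_event_cover w : ~ off_grid w -> exists k, cell_event k w.
Proof.
move=> on_grid; have /fin_all_exists[k kw] : forall r, grid_cell m (X r w).
  by move=> r; apply: contrapT => no_cell; apply: on_grid; exists r.
by exists [ffun r => k r] => r; rewrite ffunE.
Qed.

Definition first_cells (j : nat) : set R := [set t | grid_cell m t /\ t < grid m j].

Lemma first_cells_measurable j : measurable (first_cells j).
Proof.
rewrite (_ : first_cells j = [set t | grid_cell m t] `&` `]-oo, grid m j[%classic).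
  by apply: measurableI; [exact: grid_cell_measurable | exact: measurable_itv].
by rewrite set_itvNyo.
Qed.

Lemma prob_first_cells (i : 'I_n -> nat) : (forall r, i r <= m)%N ->
  P [set w | forall r, first_cells (i r) (X r w)] = (C (fun r => grid m (i r)))%:E.
Proof.
move=> i_le_m; rewrite -X_cdf => [|r]; last exact: grid_itv.
apply: (measure_eq_negligible _ _ off_grid_negligible).
- apply: fin_forall_measurable => r.
  exact: (measurable_funPTI (X r) (first_cells_measurable (i r))).
- by apply: fin_forall_measurable => r; exact: RV_le_measurable.
- by move=> w Xw; left => r; have [_ /ltW] := Xw r.
- move=> w Xw; have [|/cell_event_cover[k kw]] := pselect (off_grid w); [by right | left => r].
  split; first by exists (k r).
  by rewrite (grid_cell_lt m_gt0 _ (kw r)) -(grid_cell_le m_gt0 _ (kw r)).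
Qed.

Variables (Xs : 'I_n -> 'I_m -> {RV P >-> R}) (x : 'I_n -> R).
Hypothesis x_cube : in_unit_cube x.

Definition Y r w := \sum_(k : {ffun 'I_n -> 'I_m})
  \1_(cell_event k) w * order_stat (fun j => Xs r j w) (k r).

Lemma Y_cell k r w : cell_event k w -> Y r w = order_stat (fun j => Xs r j w) (k r).
Proof.
move=> kw; rewrite /Y (bigD1 k) //= big1 ?addr0 => [|k' k'k].
  by rewrite indicE mem_set // mul1r.
by rewrite indicE memNset ?mul0r // => k'w; move/eqP: k'k; apply; exact: cell_event_uniq k'w kw.
Qed.

Lemma Y_no_cell r w : ~ (exists k, cell_event k w) -> Y r w = 0.
Proof.
move=> no_cell; rewrite /Y big1 // => k _.
by rewrite indicE memNset ?mul0r // => kw; apply: no_cell; exists k.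
Qed.

Definition below w r : {set 'I_m} := [set j | Xs r j w < x r]%SET.

Lemma Y_cell_lt k r w : cell_event k w -> (Y r w < x r) = (X r w < grid m #|below w r|).
Proof. by move=> kw; rewrite (Y_cell r kw) order_stat_lt (grid_cell_lt m_gt0 _ (kw r)). Qed.

Definition side (S : {ffun 'I_n -> {set 'I_m}}) r j : set R :=
  if j \in S r then `]-oo, x r[%classic else `[x r, +oo[%classic.

Lemma side_measurable S r j : measurable (side S r j).
Proof. by rewrite /side; case: ifP => _; exact: measurable_itv. Qed.

Lemma sideE S r j t : side S r j t <-> (j \in S r) = (t < x r).
Proof.
rewrite /side; case: (j \in S r); rewrite /= in_itv /= ?andbT; first by split=> [->|<-].
by rewrite leNgt; split=> [/negbTE->|<-].
Qed.

Definition pattern_event (S : {ffun 'I_n -> {set 'I_m}}) :=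
  [set w | forall r, first_cells #|S r| (X r w)] `&`
  [set w | forall r j, side S r j (Xs r j w)].

Lemma pattern_event_measurable S : measurable (pattern_event S).
Proof.
apply: measurableI; apply: fin_forall_measurable => r.
  exact: (measurable_funPTI (X r) (first_cells_measurable _)).
apply: fin_forall_measurable => j; exact: (measurable_funPTI (Xs r j) (side_measurable S r j)).
Qed.

Lemma pattern_event_below S w : pattern_event S w -> S = [ffun r => below w r].
Proof.
case=> _ Sw; apply/ffunP => r; apply/setP => j.
by rewrite ffunE inE; apply/sideE; exact: Sw.
Qed.

Lemma pattern_event_disjoint S S' : S != S' -> pattern_event S `&` pattern_event S' = set0.
Proof.
move=> /eqP S'S; apply/seteqP; split=> // w [Sw S'w]; apply: S'S.
by rewrite (pattern_event_below Sw) (pattern_event_below S'w).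
Qed.

Lemma Y_lt_pattern_events : [set w | forall r, Y r w < x r] =
  [set w | exists S, pattern_event S w] `|`
  [set w | ~ (exists k, cell_event k w) /\ forall r, 0 < x r].
Proof.
apply/seteqP; split=> w.
  move=> Yw; have [[k kw]|no_cell] := pselect (exists k, cell_event k w); last first.
    by right; split=> // r; rewrite -(Y_no_cell r no_cell); exact: Yw.
  left; exists [ffun r => below w r]; split=> r.
    by rewrite ffunE; split; [exists (k r); exact: kw | rewrite -(Y_cell_lt r kw); exact: Yw].
  by move=> j; apply/sideE; rewrite ffunE inE.
case=> [[S Sw]|[no_cell x_gt0]] r; last by rewrite Y_no_cell.
have [k kw] : exists k, cell_event k w.
  by apply: cell_event_cover => -[s]; apply; exact: (Sw.1 s).1.
rewrite (Y_cell_lt r kw); have := (Sw.1 r).2.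
by rewrite (pattern_event_below Sw) ffunE.
Qed.

Lemma prob_Y_lt_sum : P [set w | forall r, Y r w < x r] =
  (\sum_(S : {ffun 'I_n -> {set 'I_m}}) P (pattern_event S))%E.
Proof.
have patterns_measurable : measurable [set w | exists S, pattern_event S w].
  exact: fin_exists_measurable pattern_event_measurable.
have const_measurable : measurable [set _ : T | forall r, 0 < x r].
  have [x_gt0|x_ngt0] := pselect (forall r, 0 < x r).
    by rewrite (_ : [set _ | _] = setT) //; apply/seteqP; split.
  by rewrite (_ : [set _ | _] = set0) //; apply/seteqP; split.
rewrite Y_lt_pattern_events; transitivity (P [set w | exists S, pattern_event S w]).
  apply: (measure_eq_negligible _ _ off_grid_negligible) => //.
  - apply: measurableU => //; apply: measurableI => //; apply: measurableC.
    exact: fin_exists_measurable cell_event_measurable.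
  - move=> w [|[no_cell _]]; [by left | right].
    by apply: contrapT => /cell_event_cover.
  - by move=> w Sw; left; left.
exact: measure_fin_exists pattern_event_measurable pattern_event_disjoint.
Qed.

Hypothesis Xs_unif : forall r j (B : set R), measurable B ->
  P (Xs r j @^-1` B) = uniform_prob (@ltr01 R) B.
Hypothesis X_Xs_indep : forall (A : 'I_n -> set R) (B : 'I_n -> 'I_m -> set R),
  (forall r, measurable (A r)) -> (forall r j, measurable (B r j)) ->
  P ([set w | forall r, A r (X r w)] `&` [set w | forall r j, B r j (Xs r j w)]) =
  (P [set w | forall r, A r (X r w)] *
   \prod_(r < n) \prod_(j < m) P (Xs r j @^-1` B r j))%E.

Lemma prob_side S r j :
  P (Xs r j @^-1` side S r j) = (if j \in S r then x r else 1 - x r)%:E.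
Proof.
rewrite Xs_unif /side; last exact: side_measurable.
by case: ifP => _; [exact: uniform01_lt | exact: uniform01_ge].
Qed.

Lemma prob_pattern_event S : P (pattern_event S) =
  (C (fun r => grid m #|S r|) *
   \prod_(r < n) \prod_(j < m) (if j \in S r then x r else 1 - x r))%:E.
Proof.
rewrite (X_Xs_indep (A := fun r => first_cells #|S r|) (B := side S)); last 2 first.
- by move=> r; exact: first_cells_measurable.
- exact: side_measurable.
rewrite prob_first_cells => [|r]; last by rewrite (leq_trans (max_card _)) ?card_ord.
under eq_bigr do under eq_bigr do rewrite prob_side.
by under eq_bigr do rewrite prodEFin; rewrite prodEFin -EFinM.
Qed.

Lemma prob_Y_lt : P [set w | forall r, Y r w < x r] = (bernstein_copula m C x)%:E.
Proof.
rewrite prob_Y_lt_sum; under eq_bigr do rewrite prob_pattern_event.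
rewrite sumEFin; congr _%:E.
pose F (i : {ffun 'I_n -> 'I_m.+1}) := C (fun r => grid m (i r)) *
  \prod_(r < n) (x r ^+ i r * (1 - x r) ^+ (m - i r)).
transitivity (\sum_(S : {ffun 'I_n -> {set 'I_m}}) F (card_ffun S)).
  apply: eq_bigr => S _; rewrite /F; congr (C _ * _).
    by apply/funext => r; rewrite card_ffunE.
  by apply: eq_bigr => r _; rewrite prod_if_mem card_ffunE.
rewrite sum_card_ffun; apply: eq_bigr => i _.
rewrite /F -mulrA -big_split; congr (_ * _); apply: eq_bigr => r _.
by rewrite /bern /= mulrC mulrA.
Qed.

End CopulaVector.

Theorem mainTheorem9 (R : realType) (n m : nat) (C : ('I_n -> R) -> R)
  (d : measure_display) (T : measurableType d) (P : probability T R)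
  (X : 'I_n -> {RV P >-> R}) (Xs : 'I_n -> 'I_m -> {RV P >-> R}) :
  (2 <= n)%N -> (1 <= m)%N ->
  is_copula C ->
  (forall x : 'I_n -> R, in_unit_cube x ->
     P [set w | forall r, X r w <= x r] = (C x)%:E) ->
  (forall r j (B : set R), measurable B ->
     P (Xs r j @^-1` B) = uniform_prob (@ltr01 R) B) ->
  (forall (A : 'I_n -> set R) (B : 'I_n -> 'I_m -> set R),
     (forall r, measurable (A r)) -> (forall r j, measurable (B r j)) ->
     P ([set w | forall r, A r (X r w)] `&`
        [set w | forall r j, B r j (Xs r j w)])
     = (P [set w | forall r, A r (X r w)] *
        \prod_(r < n) \prod_(j < m) P (Xs r j @^-1` B r j))%E) ->
  let E (k : {ffun 'I_n -> 'I_m}) :=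
    [set w | forall r, (k r)%:R / m%:R < X r w < (k r).+1%:R / m%:R] in
  let Y (r : 'I_n) (w : T) :=
    \sum_(k : {ffun 'I_n -> 'I_m})
      (\1_(E k) w) * order_stat (fun j => Xs r j w) (k r) in
  forall x : 'I_n -> R, in_unit_cube x ->
    P [set w | forall r, Y r w < x r] = (bernstein_copula m C x)%:E.
Proof.
move=> _ m_gt0 [_ _ C_margin _] X_cdf Xs_unif X_Xs_indep E Y x x_cube.
exact (prob_Y_lt C_margin X_cdf m_gt0 x_cube Xs_unif X_Xs_indep).
Qed.
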